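(* Let $G$ be a connected nontrivial graph with $m$ vertices and let $n\geq3$. Then $$\lambda'(G\boxtimes C_n)=\min\{3n\lambda(G),\ 2(m+2e(G)),\ 6\delta(G)+2\}.$$
   Context: All graphs are finite, simple and undirected; ''nontrivial'' means having at least two vertices. $C_n$ denotes the cycle on $n$ vertices. For a graph $G$: $e(G)=|E(G)|$; $\delta(G)$ is the minimum degree; $\lambda(G)$ is the edge-connectivity. A restricted edge-cut of a connected graph $G$ is a set $S\subseteq E(G)$ such that $G-S$ is disconnected and every component of $G-S$ has at least $2$ vertices; the restricted edge-connectivity $\lambda'(G)$ is the minimum cardinality of a restricted edge-cut. The strong product $G\boxtimes H$ has vertex set $V(G)\times V(H)$, with $(x_1,y_1)$ and $(x_2,y_2)$ adjacent iff either $x_1=x_2$ and $y_1y_2\in E(H)$, or $y_1=y_2$ and $x_1x_2\in E(G)$, or $x_1x_2\in E(G)$ and $y_1y_2\in E(H)$. *)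

(* finite simple graphs as symmetric irreflexive relations
   on a finType. *)
From mathcomp Require Import all_boot.
Set Implicit Arguments. Unset Strict Implicit. Unset Printing Implicit Defensive.

Section Graphs.
Variable T : finType.
Variable e : rel T.

Definition edges : {set {set T}} :=
  [set [set x; y] | x in T, y in T & e x y].

Definition del_edges (S : {set {set T}}) : rel T :=
  fun x y => e x y && ([set x; y] \notin S).

Definition connectedb (r : rel T) : bool :=
  [forall x, forall y, connect r x y].

Definition edge_cut (S : {set {set T}}) : bool :=
  (S \subset edges) && ~~ connectedb (del_edges S).

Definition restricted_edge_cut (S : {set {set T}}) : bool :=
  edge_cut S && [forall x, exists y, (y != x) && connect (del_edges S) x y].

(* lambda(G): minimum size of an edge-cut (default #|E| never used for
   nontrivial graphs, since E itself is then an edge-cut) *)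
Definition edge_conn : nat :=
  \big[minn/#|edges|]_(S : {set {set T}} | edge_cut S) #|S|.

Definition restr_edge_conn : nat :=
  \big[minn/#|edges|]_(S : {set {set T}} | restricted_edge_cut S) #|S|.

Definition degree (x : T) : nat := #|[set y | e x y]|.

Definition min_deg : nat := \big[minn/#|T|]_(x : T) degree x.

End Graphs.

Definition cycle_rel (n : nat) : rel 'I_n :=
  fun i j => (nat_of_ord j == i.+1 %% n) || (nat_of_ord i == j.+1 %% n).

Definition strong_prod (U W : finType) (g : rel U) (h : rel W) : rel (U * W) :=
  fun p q => [|| (p.1 == q.1) && h p.2 q.2,
                 (p.2 == q.2) && g p.1 q.1
               | g p.1 q.1 && h p.2 q.2].
Arguments cycle_rel n : clear implicits.

From mathcomp Require Import all_boot all_order zify.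
Set Implicit Arguments. Unset Strict Implicit. Unset Printing Implicit Defensive.

(* Write H = G ⊠ C_n and ∂X for the number of edges of H leaving X ⊆ V(H).  A minimum
   restricted edge-cut is a boundary ∂X with |X|, |V(H) \ X| >= 2, and such a boundary is a
   restricted edge-cut as soon as every vertex has a neighbour on its own side.

   Upper bound: X = A × V(C_n) for a minimum edge-cut (A, V(G) \ A) of G, a layer V(G) × {i},
   and {(u, i), (u, i + 1)} with deg u = δ(G) have boundaries of sizes 3nλ(G), 2(m + 2e(G))
   and at most 6δ(G) + 2.

   Lower bound: ∂X is the sum over the columns {u} × V(C_n) of their boundaries in C_n plus,
   for every edge uv of G, the edges from column u to column v, which see C_n through closed
   neighbourhoods; the same holds with layers instead of columns.  If X contains a whole
   column and misses another, every layer of X separates them in G, and submodularity of ∂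
   bounds the edges between consecutive layers, so ∂X >= nλ + 2nλ.  Otherwise X or its
   complement meets every column in a proper subset; each occupied column costs 2 inside
   C_n, 2 towards each occupied neighbouring column and 3 per vertex towards each empty one,
   which adds up to at least 6δ(G) + 2.  This lower bound min(3nλ, 6δ + 2) meets the upper
   bound. *)

Lemma eq_set2 (T : finType) (a b c d : T) :
  ([set a; b] == [set c; d]) = ((a == c) && (b == d)) || ((a == d) && (b == c)).
Proof.
apply/eqP/idP => [E|/orP[]/andP[/eqP-> /eqP->] //]; last by rewrite setUC.
have ab : {subset [set a; b] <= [set c; d]} by rewrite E.
have cd : {subset [set c; d] <= [set a; b]} by rewrite E.
move: (ab a (set21 a b)) (ab b (set22 a b)) (cd c (set21 c d)) (cd d (set22 c d)).
rewrite !inE.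
by do 4 case/orP => /eqP ?; subst; rewrite ?eqxx ?orbT.
Qed.

Section BigMin.
Variables (I : finType) (P : pred I) (F : I -> nat) (d : nat).

Lemma bigmin_le i : P i -> \big[minn/d]_(j | P j) F j <= F i.
Proof. by rewrite -minEnat -leEnat; apply: Order.TotalTheory.bigmin_le_cond. Qed.

Lemma bigmin_ge L : L <= d -> (forall i, P i -> L <= F i) ->
  L <= \big[minn/d]_(j | P j) F j.
Proof. by move=> Ld LF; rewrite -minEnat -leEnat; apply/Order.TotalTheory.bigmin_geP. Qed.

Lemma bigmin_attained :
  \big[minn/d]_(j | P j) F j = d \/ exists2 i, P i & \big[minn/d]_(j | P j) F j = F i.
Proof.
elim/big_ind: _; [by left | | by move=> i Pi; right; exists i].
by move=> a b ha hb; case: (leqP a b) => ab.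
Qed.

End BigMin.

Section Boundary.
Variables (T : finType) (r : rel T).

Definition arcs_out (A B : {set T}) : nat :=
  \sum_x \sum_y ((x \in A) && (y \notin B) && r x y).

Lemma arcs_out0l B : arcs_out set0 B = 0.
Proof. by rewrite /arcs_out big1 // => x _; rewrite big1 // => y _; rewrite inE. Qed.

Lemma arcs_outTr A : arcs_out A setT = 0.
Proof. by rewrite /arcs_out big1 // => x _; rewrite big1 // => y _; rewrite inE andbF. Qed.

Lemma degreeE x : degree r x = \sum_y (r x y : nat).
Proof. by rewrite /degree -sum1_card big_mkcond; apply: eq_bigr => y _; rewrite inE. Qed.

Lemma arcs_out0r A : arcs_out A set0 = \sum_(x in A) degree r x.
Proof.
rewrite /arcs_out [RHS]big_mkcond; apply: eq_bigr => x _.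
case: (x \in A); last by rewrite big1.
by rewrite degreeE; apply: eq_bigr => y _; rewrite inE.
Qed.

Lemma arcs_out_gt0 (A B : {set T}) x y : x \in A -> y \notin B -> r x y -> 0 < arcs_out A B.
Proof. by move=> xA yB rxy; rewrite /arcs_out (bigD1 x) //= (bigD1 y) //= xA yB rxy. Qed.

Lemma arcs_out_submod (A B : {set T}) :
  arcs_out (A :&: B) (A :&: B) + arcs_out (A :|: B) (A :|: B) <= arcs_out A B + arcs_out B A.
Proof.
rewrite /arcs_out -!big_split; apply: leq_sum => x _; rewrite -!big_split; apply: leq_sum => y _.
by rewrite !inE; case: (x \in A); case: (x \in B); case: (y \in A); case: (y \in B); case: (r x y).
Qed.

Definition leaving_arcs (A : {set T}) : {set T * T} :=
  [set p | (p.1 \in A) && (p.2 \notin A) && r p.1 p.2].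

Definition cutset (A : {set T}) : {set {set T}} := [set [set p.1; p.2] | p in leaving_arcs A].

Lemma card_leaving_arcs A : #|leaving_arcs A| = arcs_out A A.
Proof.
rewrite /arcs_out pair_big /= -sum1_card big_mkcond /=.
by apply: eq_bigr => p _; rewrite inE; case: ifP.
Qed.

Lemma card_cutset A : #|cutset A| = arcs_out A A.
Proof.
rewrite card_in_imset ?card_leaving_arcs // => -[x y] [x' y'].
rewrite !inE /= => /andP[/andP[xA yA] _] /andP[/andP[xA' yA'] _] /eqP.
rewrite eq_set2 => /orP[/andP[/eqP-> /eqP->] // | /andP[/eqP xy' _]].
by move: yA'; rewrite -xy' xA.
Qed.

Lemma cutset_sub A : cutset A \subset edges r.
Proof.
apply/subsetP => E /imsetP[p]; rewrite inE => /andP[_ rp] ->.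
by apply/imset2P; exists p.1 p.2; rewrite ?inE.
Qed.

Lemma mem_cutset (A : {set T}) x y : x \in A -> y \notin A -> r x y -> [set x; y] \in cutset A.
Proof. by move=> xA yA rxy; apply/imsetP; exists (x, y); rewrite ?inE /= ?xA ?yA. Qed.

Definition component (S : {set {set T}}) x : {set T} := [set y | connect (del_edges r S) x y].

Lemma cutset_component (S : {set {set T}}) x : cutset (component S x) \subset S.
Proof.
apply/subsetP => E /imsetP[p]; rewrite !inE => /andP[/andP[p1 p2] rp] ->.
apply: contraR p2 => pS; apply: connect_trans p1 (connect1 _).
by rewrite /del_edges rp pS.
Qed.

Lemma disconnected_component (S : {set {set T}}) :
  ~~ connectedb (del_edges r S) -> exists x y, y \notin component S x.
Proof.
rewrite /connectedb negb_forall => /existsP[x]; rewrite negb_forall => /existsP[y nxy].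
by exists x, y; rewrite inE.
Qed.

Hypothesis rs : symmetric r.

Lemma arcs_out_setC A : arcs_out (~: A) (~: A) = arcs_out A A.
Proof.
rewrite /arcs_out exchange_big; apply: eq_bigr => x _; apply: eq_bigr => y _.
by rewrite !inE negbK rs; case: (x \in A); case: (y \in A).
Qed.

Lemma cutset_closed (A : {set T}) (S : {set {set T}}) x y :
  cutset A \subset S -> connect (del_edges r S) x y -> (x \in A) = (y \in A).
Proof.
move=> AS /connectP[p pp ->]; elim: p x pp => //= z p IH x /andP[/andP[rxz xzS] pz].
rewrite -(IH z pz); apply: contraNeq xzS => xzA; apply: (subsetP AS).
move: xzA; case xA: (x \in A); case zA: (z \in A) => //= _.
  by apply: mem_cutset; rewrite ?xA ?zA.
by rewrite setUC; apply: mem_cutset; rewrite ?xA ?zA // rs.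
Qed.

Lemma edge_cut_cutset (A : {set T}) x y : x \in A -> y \notin A -> edge_cut r (cutset A).
Proof.
move=> xA yA; rewrite /edge_cut cutset_sub; apply/forallPn; exists x; apply/forallPn; exists y.
by apply: contra yA => /(cutset_closed (subxx _)) <-.
Qed.

Hypothesis ri : irreflexive r.

Lemma restricted_cutset (A : {set T}) x y : x \in A -> y \notin A ->
  (forall z, exists2 w, r z w & (z \in A) = (w \in A)) -> restricted_edge_cut r (cutset A).
Proof.
move=> xA yA nbA; rewrite /restricted_edge_cut (edge_cut_cutset xA yA).
apply/forallP => z; have [w rzw zwA] := nbA z; apply/existsP; exists w.
rewrite connect1 ?andbT; first by apply: contraTneq rzw => ->; rewrite ri.
rewrite /del_edges rzw; apply/imsetP => -[p]; rewrite inE => /andP[/andP[p1 p2] _] /eqP.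
by rewrite eq_set2 => /orP[]/andP[/eqP zp /eqP wp]; move: zwA; rewrite zp wp p1 (negbTE p2).
Qed.

Lemma restricted_cut_cutset (S : {set {set T}}) : restricted_edge_cut r S ->
  exists A, [/\ cutset A \subset S, 1 < #|A| & 1 < #|~: A|].
Proof.
case/andP => /andP[_ /disconnected_component[x [y yA]]] /forallP nb.
exists (component S x); split; first exact: cutset_component.
  have /existsP[x' /andP[x'x cx']] := nb x.
  by apply/card_gt1P; exists x, x'; rewrite !inE connect0 cx' eq_sym x'x.
have /existsP[y' /andP[y'y cy']] := nb y.
have y'A : y' \notin component S x.
  have dsym : symmetric (del_edges r S) by move=> a b; rewrite /del_edges rs setUC.
  apply: contra yA; rewrite !inE => cxy'; apply: connect_trans cxy' _.
  by rewrite (sym_connect_sym dsym).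
by apply/card_gt1P; exists y, y'; rewrite !in_setC yA y'A eq_sym y'y.
Qed.

End Boundary.

Section Degrees.
Variables (T : finType) (r : rel T).

Definition reflc : rel T := fun x y => (x == y) || r x y.

Lemma min_deg_le x : min_deg r <= degree r x.
Proof. exact: bigmin_le. Qed.

Lemma connected_neighbour : connectedb r -> 1 < #|T| -> forall x, exists y, r x y.
Proof.
move=> conn /card_gt1P[a [b [_ _ ab]]] x.
have [y yx] : exists y, y != x.
  by case: (a =P x) => [<-|/eqP]; [exists b; rewrite eq_sym | exists a].
have /connectP[[|z p] /= xp yl] := forallP (forallP conn x) y; last by exists z; case/andP: xp.
by rewrite yl eqxx in yx.
Qed.

Lemma edge_conn_attained : 1 < #|T| ->
  exists (A : {set T}) x y, [/\ x \in A, y \notin A & arcs_out r A A <= edge_conn r].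
Proof.
move=> /card_gt1P[x [y [_ _ xy]]]; rewrite /edge_conn.
case: (bigmin_attained (edge_cut r) (fun S => #|S|) #|edges r|) => [->|[S /andP[_]]].
  exists [set x], x, y; rewrite set11 inE eq_sym xy -card_cutset.
  by split=> //; apply: subset_leq_card; apply: cutset_sub.
case/disconnected_component => a [b bA] ->; exists (component r S a), a, b; split=> //.
  by rewrite inE connect0.
by rewrite -card_cutset subset_leq_card ?cutset_component.
Qed.

Hypothesis ri : irreflexive r.

Lemma arcs_out_reflc (Y Z : {set T}) : arcs_out reflc Y Z = #|Y :\: Z| + arcs_out r Y Z.
Proof.
rewrite /arcs_out -sum1_card [\sum_(x in _) 1]big_mkcond -big_split; apply: eq_bigr => x _ /=.
rewrite (bigD1 x) //= [in RHS](bigD1 x) //= /reflc eqxx ri andbF add0n andbT !inE.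
congr (_ + _); first by case: (x \in Y); case: (x \in Z).
by apply: eq_bigr => y /negbTE; rewrite eq_sym => ->.
Qed.

Lemma arcs_out_set1 x : arcs_out r [set x] [set x] = degree r x.
Proof.
rewrite /arcs_out (bigD1 x) ?inE //= [X in _ + X]big1 => [|y yx]; last first.
  by apply: big1 => z _; rewrite inE (negbTE yx).
rewrite addn0 degreeE; apply: eq_bigr => y _; rewrite !inE eqxx /=.
by case: (y =P x) => [->|]; rewrite ?ri.
Qed.

Lemma degree_reflc x : degree reflc x = (degree r x).+1.
Proof.
rewrite /degree (_ : [set y | reflc x y] = x |: [set y | r x y]) ?cardsU1 ?inE ?ri //.
by apply/setP => y; rewrite !inE eq_sym.
Qed.

Lemma min_deg_attained : 0 < #|T| -> exists x, degree r x = min_deg r.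
Proof.
move=> /card_gt0P[x _]; have := min_deg_le x; rewrite /min_deg.
case: (bigmin_attained xpredT (degree r) #|T|) => [-> le_T_deg|[y _ ->]]; last by exists y.
suff : degree r x < #|T| by rewrite ltnNge le_T_deg.
by apply: proper_card; apply/properP; split; [exact: subset_predT | exists x; rewrite ?inE ?ri].
Qed.

Hypothesis rs : symmetric r.

Lemma sum_degree : \sum_x degree r x = 2 * #|edges r|.
Proof.
pose P := [set p : T * T | r p.1 p.2].
pose ends p : {set T} := [set p.1; p.2].
have -> : \sum_x degree r x = #|P|.
  under eq_bigr => x _ do rewrite degreeE.
  by rewrite pair_big -sum1_card [RHS]big_mkcond; apply: eq_bigr => -[x y] _; rewrite inE.
have -> : edges r = ends @: P.
  apply/setP => E; apply/imset2P/imsetP => [[x y _]|[p]].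
    by rewrite inE => rxy ->; exists (x, y); rewrite ?inE.
  by rewrite inE => rp ->; exists p.1 p.2; rewrite ?inE.
rewrite -sum1_card (partition_big_imset ends) /= mulnC -sum_nat_const.
apply: eq_bigr => E /imsetP[[x y]]; rewrite inE /= => rxy ->.
have xy : x != y by apply: contraTneq rxy => ->; rewrite ri.
have <- : #|[set (x, y); (y, x)]| = 2 by rewrite cards2 xpair_eqE negb_and xy.
rewrite -sum1_card.
apply: eq_bigl => -[a b]; rewrite !inE /ends eq_set2 /= !xpair_eqE.
case: (boolP ((a == x) && (b == y) || (a == y) && (b == x))) => [|_]; rewrite ?andbF // andbT.
by case/orP => /andP[/eqP-> /eqP->]; rewrite // rs.
Qed.

Lemma edge_conn_le (A : {set T}) x y : x \in A -> y \notin A -> edge_conn r <= arcs_out r A A.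
Proof. by move=> xA yA; rewrite -card_cutset; apply/bigmin_le/(edge_cut_cutset rs xA yA). Qed.

End Degrees.

Section RestrictedConnectivity.
Variables (T : finType) (r : rel T).

Lemma restr_edge_conn_le S : restricted_edge_cut r S -> restr_edge_conn r <= #|S|.
Proof. exact: bigmin_le. Qed.

Lemma restr_edge_conn_ge S0 L : restricted_edge_cut r S0 ->
  (forall S, restricted_edge_cut r S -> L <= #|S|) -> L <= restr_edge_conn r.
Proof.
move=> RS0 LS; apply: bigmin_ge => //; apply: leq_trans (LS _ RS0) _.
by apply: subset_leq_card; case/andP: RS0 => /andP[].
Qed.

End RestrictedConnectivity.

Section ClosedBoundary.
Variables (T : finType) (r : rel T).
Hypothesis ri : irreflexive r.
Hypothesis boundary_ge2 :
  forall (Z : {set T}) x y, x \in Z -> y \notin Z -> 1 < arcs_out r Z Z.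
Hypothesis T_gt2 : 2 < #|T|.

Lemma boundary_ge2_complete : #|T| = 3 -> forall x y, x != y -> r x y.
Proof.
move=> T3 x y xy; have nbx : [set z | r x z] \subset [set~ x].
  by apply/subsetP => z; rewrite !inE; apply: contraTneq => ->; rewrite ri.
have /eqP nbxE : [set z | r x z] == [set~ x].
  rewrite eqEcard nbx cardsC1 T3 -[#|_|]/(degree r x) -(arcs_out_set1 ri).
  by apply: (@boundary_ge2 _ x y); rewrite !inE // eq_sym.
have : y \in [set~ x] by rewrite !inE eq_sym.
by rewrite -nbxE inE.
Qed.

Lemma arcs_out_reflc_setC_ge4 (Y : {set T}) :
  4 <= arcs_out (reflc r) Y (~: Y) + arcs_out (reflc r) (~: Y) Y.
Proof.
(* The total is #|T| plus the arcs inside [Y] and inside [~: Y]; when [#|T| = 3] one side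
   contains two vertices, which are adjacent. *)
rewrite !(arcs_out_reflc ri) !setDE !setCK !setIid addnACA cardsC.
case: (ltnP 3 #|T|) => [T_gt3 | T_le3]; first exact: ltn_addr.
have [i [j [ij_same ij]]] : exists i j, [/\ (i \in Y) = (j \in Y) & i != j].
  have := cardsC Y; case: (ltnP 1 #|Y|) => [/card_gt1P[i [j [iY jY ij]]] | Y_le1] cardY.
    by exists i, j; rewrite iY jY.
  have /card_gt1P[i [j [iY jY ij]]] : 1 < #|~: Y| by lia.
  by exists i, j; move: iY jY; rewrite !inE => /negbTE-> /negbTE->.
have rij : r i j by apply: boundary_ge2_complete ij; lia.
suff : 0 < arcs_out r Y (~: Y) + arcs_out r (~: Y) Y by lia.
rewrite addn_gt0; case iY: (i \in Y) in ij_same.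
  by rewrite (arcs_out_gt0 iY _ rij) // ?inE ?negbK -?ij_same.
by rewrite (arcs_out_gt0 (_ : i \in ~: Y) (_ : j \notin Y) rij) ?orbT // ?inE ?iY -?ij_same.
Qed.

Lemma arcs_out_reflc_ge4 (Y Z : {set T}) y1 y2 z1 z2 :
  y1 \in Y -> y2 \notin Y -> z1 \in Z -> z2 \notin Z ->
  4 <= arcs_out (reflc r) Y Z + arcs_out (reflc r) Z Y.
Proof.
move=> y1Y y2Y z1Z z2Z.
have card_gt0 (A : {set T}) x : x \in A -> 0 < #|A| by move=> xA; apply/card_gt0P; exists x.
case: (set_0Vmem (Y :&: Z)) => [YZ0 | [a aYZ]];
  case: (set_0Vmem (~: (Y :|: Z))) => [YZT | [b bYZ]].
- suff -> : Z = ~: Y by apply: arcs_out_reflc_setC_ge4.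
  apply/setP => x; move/setP/(_ x): YZ0; move/setP/(_ x): YZT.
  by rewrite !inE; case: (x \in Y); case: (x \in Z).
- have y1Z : y1 \notin Z by move/setP/(_ y1): YZ0; rewrite !inE y1Y /= => ->.
  have z1Y : z1 \notin Y by move/setP/(_ z1): YZ0; rewrite !inE z1Z andbT => ->.
  have : 0 < #|Y :\: Z| by apply: (card_gt0 _ y1); rewrite !inE y1Y y1Z.
  have : 0 < #|Z :\: Y| by apply: (card_gt0 _ z1); rewrite !inE z1Z z1Y.
  have : 1 < arcs_out r (Y :|: Z) (Y :|: Z).
    by apply: (@boundary_ge2 _ y1 b); rewrite -?in_setC // inE y1Y.
  have := arcs_out_submod r Y Z; rewrite !(arcs_out_reflc ri); lia.
- have z2Y : z2 \in Y by move/setP/(_ z2): YZT; rewrite !inE (negbTE z2Z) orbF => /negbFE.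
  have y2Z : y2 \in Z by move/setP/(_ y2): YZT; rewrite !inE (negbTE y2Y) => /negbFE.
  have : 0 < #|Y :\: Z| by apply: (card_gt0 _ z2); rewrite !inE z2Y z2Z.
  have : 0 < #|Z :\: Y| by apply: (card_gt0 _ y2); rewrite !inE y2Y y2Z.
  have : 1 < arcs_out r (Y :&: Z) (Y :&: Z).
    by apply: (@boundary_ge2 _ a y2 aYZ); rewrite !inE (negbTE y2Y).
  have := arcs_out_submod r Y Z; rewrite !(arcs_out_reflc ri); lia.
- have : 1 < arcs_out r (Y :&: Z) (Y :&: Z).
    by apply: (@boundary_ge2 _ a b aYZ); move: bYZ; rewrite !inE => /norP[/negbTE-> _].
  have : 1 < arcs_out r (Y :|: Z) (Y :|: Z).
    apply: (@boundary_ge2 _ a b); rewrite -?in_setC //.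
    by move: aYZ; rewrite !inE => /andP[->].
  have := arcs_out_submod r Y Z; rewrite !(arcs_out_reflc ri); lia.
Qed.

End ClosedBoundary.

Section Cycle.
Variable n : nat.
Hypothesis n_gt2 : 2 < n.
Local Notation C := (cycle_rel n).

Lemma val_ordS (i : 'I_n) : val (ordS i) = if i.+1 == n then 0 else i.+1.
Proof.
rewrite /=; have := ltn_ord i; case: eqP => [-> _|ne lt]; first by rewrite modnn.
by rewrite modn_small //; lia.
Qed.

Lemma val_ord_pred (i : 'I_n) : val (ord_pred i) = if i == 0 :> nat then n.-1 else i.-1.
Proof.
rewrite /=; have := ltn_ord i; case: eqP => [-> lt|ne lt]; first by rewrite modn_small //; lia.
by rewrite (_ : (i + n).-1 = i.-1 + n) ?modnDr ?modn_small //; lia.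
Qed.

Lemma ordS_neq (i : 'I_n) : ordS i != i.
Proof. by rewrite -val_eqE val_ordS /=; have := ltn_ord i; case: (i.+1 =P n); lia. Qed.

Lemma ord_pred_neq (i : 'I_n) : ord_pred i != i.
Proof. by rewrite -val_eqE val_ord_pred /=; have := ltn_ord i; case: (i =P 0 :> nat); lia. Qed.

Lemma ordS_neq_pred (i : 'I_n) : ordS i != ord_pred i.
Proof.
rewrite -val_eqE val_ordS val_ord_pred /=; have := ltn_ord i.
by case: (i.+1 =P n); case: (i =P 0 :> nat); lia.
Qed.

Lemma cycle_relE (i j : 'I_n) : C i j = (j == ordS i) || (j == ord_pred i).
Proof.
rewrite (_ : C i j = (j == ordS i) || (i == ordS j)) //; congr (_ || _).
by apply/eqP/eqP => [->|->]; rewrite ?ordSK ?ord_predK.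
Qed.

Lemma cycle_rel_sym : symmetric C.
Proof. by move=> i j; rewrite /cycle_rel orbC. Qed.

Lemma cycle_rel_irr : irreflexive C.
Proof.
by move=> i; rewrite cycle_relE !(eq_sym i) (negbTE (ordS_neq i)) (negbTE (ord_pred_neq i)).
Qed.

Lemma degree_cycle i : degree C i = 2.
Proof.
rewrite /degree (_ : [set j | C i j] = [set ordS i; ord_pred i]) ?cards2 ?ordS_neq_pred //.
by apply/setP => j; rewrite !inE cycle_relE.
Qed.

Lemma ordS_exit (Z : {set 'I_n}) i j :
  i \in Z -> j \notin Z -> exists2 k, k \in Z & ordS k \notin Z.
Proof.
move=> iZ jZ; apply/exists_inP; apply: contraR jZ; rewrite negb_exists_in => /forall_inP closedZ.
have iterZ k : iter k (@ordS n) i \in Z by elim: k => //= k /closedZ; rewrite negbK.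
have val_iter k : val (iter k (@ordS n) i) = (i + k) %% n.
  elim: k => [|k IH] /=; first by rewrite addn0 modn_small.
  by rewrite IH addnS -addn1 modnDml addn1.
suff -> : j = iter (j + n - i) (@ordS n) i by [].
apply: val_inj; rewrite val_iter (_ : i + (j + n - i) = j + n) ?modnDr ?modn_small //.
by have := ltn_ord i; lia.
Qed.

Lemma arcs_out_reflc_cycle0 (Y : {set 'I_n}) : arcs_out (reflc C) Y set0 = 3 * #|Y|.
Proof.
rewrite arcs_out0r mulnC -sum_nat_const; apply: eq_bigr => i _.
by rewrite degree_reflc ?degree_cycle //; apply: cycle_rel_irr.
Qed.

Lemma cycle_boundary_ge2 (Z : {set 'I_n}) i j : i \in Z -> j \notin Z -> 2 <= arcs_out C Z Z.
Proof.
move=> iZ jZ; have [k kZ SkZ] := ordS_exit iZ jZ.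
have [l lZ SlZ] : exists2 l, l \in ~: Z & ordS l \notin ~: Z.
  by apply: (@ordS_exit _ j i); rewrite inE ?negbK.
rewrite !inE negbK in lZ SlZ; rewrite -card_leaving_arcs; apply/card_gt1P.
exists (k, ordS k), (ordS l, l); rewrite !inE /= kZ SkZ lZ SlZ !cycle_relE eqxx ordSK eqxx orbT.
split=> //; apply/eqP => -[kSl Skl]; move: (ordS_neq_pred k).
by rewrite {2}kSl ordSK Skl eqxx.
Qed.

Lemma arcs_out_cycle_pair i : arcs_out C [set i; ordS i] [set i; ordS i] <= 2.
Proof.
rewrite -card_leaving_arcs.
apply: leq_trans (_ : #|[set (i, ord_pred i); (ordS i, ordS (ordS i))]| <= 2).
  apply: subset_leq_card; apply/subsetP => -[j k]; rewrite !inE /= cycle_relE !xpair_eqE.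
  case/andP => /andP[/orP[]/eqP-> kZ] /orP[]/eqP kE; move: kZ; rewrite kE ?ordSK ?eqxx ?orbT //.
by rewrite cards2; case: (_ != _).
Qed.

Lemma reflc_cycle_ge4 (Y Z : {set 'I_n}) y1 y2 z1 z2 :
  y1 \in Y -> y2 \notin Y -> z1 \in Z -> z2 \notin Z ->
  4 <= arcs_out (reflc C) Y Z + arcs_out (reflc C) Z Y.
Proof.
apply: arcs_out_reflc_ge4; rewrite ?card_ord //; first exact: cycle_rel_irr.
exact: cycle_boundary_ge2.
Qed.

End Cycle.

Lemma sum_pair (U W : finType) (F : U * W -> nat) : \sum_p F p = \sum_u \sum_i F (u, i).
Proof. by rewrite pair_big; apply: eq_bigr => -[]. Qed.

Lemma leq_sum_sym (T : finType) (P : pred T) (r : rel T) (f : T -> T -> nat) c :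
  symmetric r -> (forall u v, P u -> P v -> r u v -> 2 * c <= f u v + f v u) ->
  \sum_(u | P u) c * \sum_(v | P v) (r u v : nat) <= \sum_(u | P u) \sum_(v | P v) r u v * f u v.
Proof.
move=> rs f_ge; rewrite -leq_double -!addnn [X in _ <= _ + X]exchange_big -!big_split.
apply: leq_sum => u uU /=; rewrite !big_distrr -!big_split /=; apply: leq_sum => v vU /=.
rewrite [r v u]rs; case: (boolP (r u v)) => [ruv | _]; rewrite ?muln0 ?mul1n ?muln1 //.
by rewrite addnn -mul2n f_ge.
Qed.

Section StrongProduct.
Variables (U W : finType) (g : rel U) (h : rel W).
Local Notation H := (strong_prod g h).

Definition column (A : {set U * W}) u : {set W} := [set i | (u, i) \in A].

Lemma sum_card_column (A : {set U * W}) : \sum_u #|column A u| = #|A|.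
Proof.
rewrite -[RHS]sum1_card [RHS]big_mkcond sum_pair; apply: eq_bigr => u _.
by rewrite -sum1_card big_mkcond; apply: eq_bigr => i _; rewrite inE.
Qed.

Lemma strong_prod_sym : symmetric g -> symmetric h -> symmetric H.
Proof. by move=> gs hs [u i] [v j]; rewrite /strong_prod /= gs hs (eq_sym u) (eq_sym i). Qed.

Lemma strong_prod_irr : irreflexive g -> irreflexive h -> irreflexive H.
Proof. by move=> gi hi [u i]; rewrite /strong_prod /= gi hi !andbF. Qed.

Lemma arcs_out_strong_prodC (A B : {set U * W}) :
  arcs_out H A B = arcs_out (strong_prod h g) (swap_pair @^-1: A) (swap_pair @^-1: B).
Proof.
have swap_bij : bijective (@swap_pair W U) by exists swap_pair; apply: swap_pairK.
rewrite /arcs_out (reindex _ (onW_bij _ swap_bij)); apply: eq_bigr => -[i u] _.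
rewrite (reindex _ (onW_bij _ swap_bij)); apply: eq_bigr => -[j v] _.
by rewrite !inE /strong_prod /= orbCA (andbC (h i j)).
Qed.

Hypothesis gi : irreflexive g.

Lemma strong_prodE u v i j : H (u, i) (v, j) = if u == v then h i j else g u v && reflc h i j.
Proof.
rewrite /strong_prod /reflc /=; case: (u =P v) => [<-|_] /=; first by rewrite gi !andbF orbF.
by rewrite andb_orr andbC.
Qed.

Lemma arcs_out_columns (A B : {set U * W}) : arcs_out H A B =
  \sum_u arcs_out h (column A u) (column B u) +
  \sum_u \sum_v g u v * arcs_out (reflc h) (column A u) (column B v).
Proof.
have split_uv u v : \sum_i \sum_j (((u, i) \in A) && ((v, j) \notin B) && H (u, i) (v, j) : nat) =
    (u == v) * arcs_out h (column A u) (column B v) +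
    g u v * arcs_out (reflc h) (column A u) (column B v).
  rewrite /arcs_out !big_distrr -big_split; apply: eq_bigr => i _.
  rewrite !big_distrr -big_split; apply: eq_bigr => j _ /=.
  rewrite strong_prodE !inE; case: (u =P v) => [<-|_]; rewrite ?gi /=.
    by rewrite mul1n mul0n addn0.
  by rewrite mul0n add0n; case: (g u v); rewrite /= ?andbF ?andbT ?mul1n.
rewrite {1}/arcs_out sum_pair.
under eq_bigr => u _ do under eq_bigr => i _ do rewrite sum_pair.
under eq_bigr => u _ do rewrite exchange_big.
under eq_bigr => u _ do under eq_bigr => v _ do rewrite split_uv.
rewrite -big_split; apply: eq_bigr => u _; rewrite big_split /=; congr (_ + _).
by rewrite (bigD1 u) //= eqxx mul1n big1 ?addn0 // => v /negbTE; rewrite eq_sym => ->.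
Qed.

End StrongProduct.

Section StrongProductCycle.
Variables (V : finType) (e : rel V) (n : nat).
Hypotheses (es : symmetric e) (ei : irreflexive e) (n_gt2 : 2 < n).
Local Notation C := (cycle_rel n).
Local Notation H := (strong_prod e (cycle_rel n)).

Let Hs : symmetric H := strong_prod_sym es (@cycle_rel_sym n).
Let Hi : irreflexive H := strong_prod_irr ei (cycle_rel_irr n_gt2).

Lemma strong_prod_ordS u i : H (u, i) (u, ordS i).
Proof. by rewrite /strong_prod /= eqxx cycle_relE eqxx. Qed.

Lemma full_column_bound (X : {set V * 'I_n}) u0 w0 :
  (forall i, (u0, i) \in X) -> (forall i, (w0, i) \notin X) ->
  3 * n * edge_conn e <= arcs_out H X X.
Proof.
(* After swapping the factors, the columns [L i] are the layers of [X]; each separates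
   [u0] from [w0] in [G]. *)
move=> u0X w0X; rewrite arcs_out_strong_prodC (arcs_out_columns _ (cycle_rel_irr n_gt2)).
set L := column _; set lam := edge_conn e.
have lam_le i j : lam <= arcs_out e (L i :&: L j) (L i :&: L j) /\
                  lam <= arcs_out e (L i :|: L j) (L i :|: L j).
  split; apply: (@edge_conn_le _ _ es _ u0 w0);
    by rewrite !inE /swap_pair /= ?u0X ?(negbTE (w0X _)).
have layers : n * lam <= \sum_i arcs_out e (L i) (L i).
  rewrite -{1}(card_ord n) -sum_nat_const; apply: leq_sum => i _.
  by have [+ _] := lam_le i i; rewrite setIid.
have pair_bound i j : 2 * lam <= arcs_out (reflc e) (L i) (L j) + arcs_out (reflc e) (L j) (L i).
  rewrite !arcs_out_reflc //; apply: leq_trans (leq_add (leq_addl _ _) (leq_addl _ _)).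
  apply: leq_trans (arcs_out_submod e (L i) (L j)).
  by have [lamI lamU] := lam_le i j; rewrite mul2n -addnn leq_add.
have pairs : 2 * n * lam <= \sum_i \sum_j C i j * arcs_out (reflc e) (L i) (L j).
  rewrite (_ : 2 * n * lam = \sum_(i < n) lam * \sum_(j < n) (C i j : nat)).
    exact: leq_sum_sym (@cycle_rel_sym n) (fun i j _ _ _ => pair_bound i j).
  under eq_bigr => i _ do rewrite -degreeE degree_cycle //.
  by rewrite sum_nat_const card_ord; nia.
by apply: leq_trans _ (leq_add layers pairs); nia.
Qed.

Section NoFullColumn.
Variable S : {set V * 'I_n}.
Hypothesis holes : forall u, exists i, (u, i) \notin S.

Local Notation Y := (column S).
Local Notation U := [set u | column S u != set0].
Local Notation inner u := (\sum_(v in U) (e u v : nat)).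
Local Notation outer u := (\sum_(v | v \notin U) (e u v : nat)).

Let unoccupied_column u : u \notin U -> Y u = set0.
Proof. by rewrite inE negbK => /eqP. Qed.

Let occupied_column u : u \in U -> exists i, i \in Y u.
Proof. by rewrite inE => /set0Pn. Qed.

Let column_hole u : exists j, j \notin Y u.
Proof. by have [j uj] := holes u; exists j; rewrite inE. Qed.

Lemma occupied_cycle_bound : \sum_(u in U) 2 <= \sum_u arcs_out C (Y u) (Y u).
Proof.
rewrite [X in _ <= X](bigID (mem U)) /=; apply: leq_trans (leq_addr _ _).
apply: leq_sum => u uU; have [i iY] := occupied_column uU; have [j jY] := column_hole u.
exact: cycle_boundary_ge2 iY jY.
Qed.

Lemma occupied_edge_bound : \sum_(u in U) (2 * inner u + 3 * #|Y u| * outer u) <=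
  \sum_u \sum_v e u v * arcs_out (reflc C) (Y u) (Y v).
Proof.
rewrite [X in _ <= X](bigID (mem U)) [X in _ <= _ + X]big1 ?addn0 => [|u /unoccupied_column Yu0].
  have split_v u : \sum_v e u v * arcs_out (reflc C) (Y u) (Y v) =
      \sum_(v in U) e u v * arcs_out (reflc C) (Y u) (Y v) + 3 * #|Y u| * outer u.
    rewrite (bigID (mem U)); congr (_ + _); rewrite big_distrr.
    by apply: eq_bigr => v /unoccupied_column ->; rewrite (arcs_out_reflc_cycle0 n_gt2) mulnC.
  under [X in _ <= X]eq_bigr => u _ do rewrite split_v.
  rewrite big_split [X in _ <= X]big_split /= leq_add2r.
  apply: leq_sum_sym => // u v uU vU _.
  have [i iY] := occupied_column uU; have [j jY] := column_hole u.
  have [k kY] := occupied_column vU; have [l lY] := column_hole v.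
  exact: (reflc_cycle_ge4 n_gt2 iY jY kY lY).
by apply: big1 => v _; rewrite Yu0 arcs_out0l muln0.
Qed.

Lemma no_full_column_bound : 1 < #|S| -> 6 * min_deg e + 2 <= arcs_out H S S.
Proof.
move=> S_gt1; rewrite (arcs_out_columns _ ei).
apply: leq_trans (leq_add occupied_cycle_bound occupied_edge_bound); rewrite sum_nat_const.
set K := #|U|; set delta := min_deg e.
have outer_le u : u \in U -> outer u <= #|Y u| * outer u.
  by case/occupied_column => i iY; apply: leq_pmull; apply/card_gt0P; exists i.
have deg u : delta <= inner u + outer u.
  by rewrite (leq_trans (min_deg_le e u)) // degreeE (bigID (mem U)).
have inner_lt u : u \in U -> inner u < K.
  move=> uU; rewrite /K (cardsD1 u U) uU add1n ltnS -sum1_card (big_setD1 u uU) /= ei.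
  by apply: leq_sum => v _; case: (e u v).
(* Each occupied column contributes at least [2 + 2 delta], and at least [2 + 3 delta - inner u];
   a single occupied column has [#|S| >= 2] cells. *)
case: (ltnP 1 K) => [K_gt1 | K_le1].
  have lowA : K * (2 * delta) <= \sum_(u in U) (2 * inner u + 3 * #|Y u| * outer u).
    rewrite -sum_nat_const; apply: leq_sum => u /outer_le; have := deg u; lia.
  have lowB : K * (3 * delta) <=
      \sum_(u in U) (2 * inner u + 3 * #|Y u| * outer u) + K * (K - 1).
    rewrite -!sum_nat_const -big_split; apply: leq_sum => u uU.
    by have := outer_le u uU; have := deg u; have := inner_lt u uU; rewrite /=; lia.
  case: (ltnP 2 K) => K3; first by nia.
  have K2 : K = 2 by lia.
  by move: lowB; rewrite K2; lia.
have /cards1P[u0 U1] : #|U| == 1.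
  have /card_gt0P[[u i] uiS] : 0 < #|S| by apply: ltnW.
  rewrite eqn_leq K_le1; apply/card_gt0P; exists u.
  by rewrite inE; apply/set0Pn; exists i; rewrite inE.
have card_Yu0 : #|Y u0| = #|S|.
  rewrite -sum_card_column (bigD1 u0) //= big1 ?addn0 // => u uu0.
  by rewrite unoccupied_column ?cards0 // U1 inE.
have K1 : K = 1 by rewrite /K U1 cards1.
by have := deg u0; rewrite K1 U1 !big_set1 ei card_Yu0; nia.
Qed.

End NoFullColumn.

Lemma restricted_cut_ge S : restricted_edge_cut H S ->
  minn (3 * n * edge_conn e) (6 * min_deg e + 2) <= #|S|.
Proof.
case/(restricted_cut_cutset Hs) => X [XS X_gt1 Xc_gt1].
apply: leq_trans (subset_leq_card XS); rewrite card_cutset.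
case: (boolP [exists u, [forall i, (u, i) \in X]]) => [/existsP[u /forallP uX] | /existsPn noFull].
  case: (boolP [exists w, [forall i, (w, i) \notin X]]) => [/existsP[w /forallP wX] | noEmpty].
    exact: leq_trans (geq_minl _ _) (full_column_bound uX wX).
  rewrite -(arcs_out_setC Hs); apply: leq_trans (geq_minr _ _) (no_full_column_bound _ Xc_gt1).
  move=> w; move/existsPn/(_ w)/forallPn: noEmpty => [i].
  by rewrite negbK => wiX; exists i; rewrite inE negbK.
apply: leq_trans (geq_minr _ _) (no_full_column_bound _ X_gt1).
by move=> u; have /forallPn[i] := noFull u; exists i.
Qed.

Lemma cylinder_cut (A : {set V}) a b : a \in A -> b \notin A ->
  let X := [set p : V * 'I_n | p.1 \in A] in
  restricted_edge_cut H (cutset H X) /\ arcs_out H X X = 3 * n * arcs_out e A A.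
Proof.
move=> aA bA X; have i : 'I_n := Ordinal (ltn_trans (isT : 0 < 2) n_gt2).
split.
  apply: (restricted_cutset Hs Hi (x := (a, i)) (y := (b, i))); rewrite ?inE //.
  by move=> [u j]; exists (u, ordS j); rewrite ?strong_prod_ordS ?inE.
have colX u : column X u = if u \in A then setT else set0.
  by apply/setP => j; rewrite !inE; case: (u \in A); rewrite inE.
rewrite (arcs_out_columns _ ei) big1 ?add0n => [|u _]; last first.
  by rewrite colX; case: (u \in A); rewrite ?arcs_outTr ?arcs_out0l.
rewrite [in RHS]/arcs_out big_distrr; apply: eq_bigr => u _.
rewrite big_distrr; apply: eq_bigr => v _ /=.
rewrite !colX; case: (u \in A); case: (v \in A); rewrite ?arcs_outTr ?arcs_out0l ?muln0 //=.
by rewrite (arcs_out_reflc_cycle0 n_gt2) cardsT card_ord mulnC; case: (e u v).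
Qed.

Hypothesis nb : forall u, exists v, e u v.

Lemma layer_cut (i : 'I_n) (v0 : V) :
  let X := [set p : V * 'I_n | p.2 == i] in
  restricted_edge_cut H (cutset H X) /\ arcs_out H X X = 2 * (#|V| + 2 * #|edges e|).
Proof.
move=> X; split.
  apply: (restricted_cutset Hs Hi (x := (v0, i)) (y := (v0, ordS i))).
  - by rewrite inE.
  - by rewrite inE (ordS_neq n_gt2).
  move=> [u j]; case: (j =P i) => [->|ji].
    have [v euv] := nb u; exists (v, i); rewrite ?inE //.
    by rewrite /strong_prod /= eqxx euv orbT.
  case: (ordS j =P i) => [Sji|Sji]; last first.
    exists (u, ordS j); rewrite ?strong_prod_ordS // !inE /=.
    by case: (j =P i); case: (ordS j =P i).
  exists (u, ord_pred j).
    by rewrite Hs; have := strong_prod_ordS u (ord_pred j); rewrite ord_predK.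
  rewrite !inE (introF eqP ji); apply/esym/negbTE/eqP => /= pji.
  by move: (ordS_neq_pred n_gt2 j); rewrite Sji pji eqxx.
have colX u : column X u = [set i] by apply/setP => j; rewrite !inE.
have QC : arcs_out C [set i] [set i] = 2.
  by rewrite (arcs_out_set1 (cycle_rel_irr n_gt2)) degree_cycle.
have QC' : arcs_out (reflc C) [set i] [set i] = 2.
  by rewrite (arcs_out_reflc (cycle_rel_irr n_gt2)) setDv cards0 QC.
rewrite (arcs_out_columns _ ei) (eq_bigr (fun _ => 2)) => [|u _]; last by rewrite colX QC.
rewrite [X in _ + X](eq_bigr (fun u => \sum_v (e u v : nat) * 2)) => [|u _]; last first.
  by apply: eq_bigr => v _; rewrite !colX QC'.
have -> : \sum_u \sum_v (e u v : nat) * 2 = 2 * #|edges e| * 2.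
  by rewrite -(sum_degree ei es) big_distrl; apply: eq_bigr => u _; rewrite degreeE big_distrl.
by rewrite sum_nat_const (_ : #|xpredT| = #|V|) //; lia.
Qed.

Lemma column_pair_cut (u0 : V) (i : 'I_n) :
  let X := [set (u0, i); (u0, ordS i)] in
  restricted_edge_cut H (cutset H X) /\ arcs_out H X X <= 6 * degree e u0 + 2.
Proof.
move=> X; split.
  apply: (restricted_cutset Hs Hi (x := (u0, i)) (y := (u0, ord_pred i))).
  - by rewrite !inE eqxx.
  - rewrite !inE !xpair_eqE /= eqxx /= negb_or (ord_pred_neq n_gt2) eq_sym.
    by rewrite (ordS_neq_pred n_gt2).
  move=> [w j]; case: (boolP ((w, j) \in X)) => wjX.
    move: (wjX); rewrite !inE => /orP[]/eqP[-> ->].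
      by exists (u0, ordS i); rewrite ?strong_prod_ordS // !inE eqxx orbT.
    by exists (u0, i); [rewrite Hs strong_prod_ordS | rewrite !inE eqxx].
  case: (w =P u0) => [->|/eqP/negbTE wu0].
    have [v ev] := nb u0; exists (v, j); first by rewrite /strong_prod /= eqxx ev orbT.
    have vu0 : (v == u0) = false by apply: contraTF ev => /eqP ->; rewrite ei.
    by rewrite !inE !xpair_eqE vu0.
  by exists (w, ordS j); rewrite ?strong_prod_ordS // !inE !xpair_eqE wu0.
pose Z : {set 'I_n} := [set i; ordS i].
have colX w : column X w = if w == u0 then Z else set0.
  by apply/setP => j; rewrite !inE !xpair_eqE; case: (w == u0); rewrite /= ?inE.
have cardZ : #|Z| = 2 by rewrite cards2 eq_sym (ordS_neq n_gt2).
rewrite (arcs_out_columns _ ei) (bigD1 u0) //= big1 ?addn0 => [|w /negbTE wu0]; last first.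
  by rewrite colX wu0 arcs_out0l.
rewrite (bigD1 u0) //= [X in _ + (_ + X)]big1 ?addn0 => [|w /negbTE wu0]; last first.
  by apply: big1 => v _; rewrite colX wu0 arcs_out0l muln0.
rewrite colX eqxx addnC; apply: leq_add; last exact: arcs_out_cycle_pair.
rewrite degreeE big_distrr /=; apply: leq_sum => v _; rewrite colX.
case: (v =P u0) => [->|_]; first by rewrite ei.
by rewrite (arcs_out_reflc_cycle0 n_gt2) cardZ mulnC.
Qed.

End StrongProductCycle.

Theorem theorem3p4 (V : finType) (e : rel V) (n : nat) :
  symmetric e -> irreflexive e ->
  connectedb e -> 1 < #|V| -> 3 <= n ->
  (exists S, restricted_edge_cut (strong_prod e (cycle_rel n)) S) /\
  restr_edge_conn (strong_prod e (cycle_rel n)) =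
    minn (minn (3 * n * edge_conn e) (2 * (#|V| + 2 * #|edges e|)))
         (6 * min_deg e + 2).
Proof.
move=> es ei conn V_gt1 n_gt2.
have nb := connected_neighbour conn V_gt1.
pose i0 : 'I_n := Ordinal (ltnW (ltnW n_gt2)).
have [u0 deg_u0] := min_deg_attained ei (ltnW V_gt1).
have [A [a [b [aA bA lamA]]]] := edge_conn_attained e V_gt1.
have [R1 Q1] := cylinder_cut es ei n_gt2 aA bA.
have [R2 Q2] := layer_cut es ei n_gt2 nb i0 u0.
have [R3 Q3] := column_pair_cut es ei n_gt2 nb u0 i0.
split; first by eexists; apply: R3.
apply/eqP; rewrite eqn_leq; apply/andP; split.
  rewrite !leq_min -andbA; apply/and3P; split.
  - apply: leq_trans (restr_edge_conn_le R1) _.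
    by rewrite card_cutset Q1 leq_mul2l lamA orbT.
  - by rewrite (leq_trans (restr_edge_conn_le R2)) // card_cutset Q2.
  - by rewrite (leq_trans (restr_edge_conn_le R3)) // card_cutset -deg_u0.
apply: leq_trans (restr_edge_conn_ge R3 (restricted_cut_ge es ei n_gt2)).
by rewrite leq_min !geq_min !leqnn !orbT.
Qed.
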